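(* Let $\widehat{\Sigma}\in\mathbb{R}^{p\times p}$ with $\widehat{\Sigma}\succeq 0$, let $\theta_0\in\mathbb{R}^p$ with $s_0=\|\theta_0\|_0$, and let $\xi>0$. Let $\widehat{\theta}^{\mathrm{ZN}}=\widehat{\theta}^{\mathrm{ZN}}(\xi)$ be a minimizer of $$\theta\mapsto \frac{1}{2}\langle \theta-\theta_0,\widehat{\Sigma}(\theta-\theta_0)\rangle+\xi\|\theta\|_1$$ over $\theta\in\mathbb{R}^p$. Then $$\|\widehat{\theta}^{\mathrm{ZN}}\|_0\le\Big(1+\frac{4\|\widehat{\Sigma}\|_2}{\widehat{\kappa}(s_0,1)}\Big)s_0 .$$
   Context: $\|\cdot\|_0$ counts nonzero entries; $\|\widehat\Sigma\|_2$ is the spectral norm. The restricted eigenvalue constant is $\widehat{\kappa}(s,c_0)=\min_{J\subseteq[p],|J|\le s}\ \min_{u\in\mathbb{R}^p,\ \|u_{J^c}\|_1\le c_0\|u_J\|_1}\frac{\langle u,\widehat{\Sigma}u\rangle}{\|u\|_2^2}$, where $u_J$ is the restriction of $u$ to the indices in $J$. In the paper $\widehat\Sigma={\mathbf X}^{\sf T}{\mathbf X}/n$ for a design matrix ${\mathbf X}\in\mathbb{R}^{n\times p}$. *)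

From HB Require Import structures.
From mathcomp Require Import all_boot all_order all_algebra.
From mathcomp Require Import boolp classical_sets reals.
Set Implicit Arguments. Unset Strict Implicit. Unset Printing Implicit Defensive.
Import Order.TTheory GRing.Theory Num.Theory.
Local Open Scope ring_scope.
Local Open Scope classical_set_scope.

Section Defs.
Variables (R : realType) (p : nat).

Definition dotv (u v : 'cV[R]_p) : R := \sum_(i < p) u i 0 * v i 0.

Definition norm1 (u : 'cV[R]_p) : R := \sum_(i < p) `|u i 0|.
Definition norm2 (u : 'cV[R]_p) : R := Num.sqrt (dotv u u).
Definition norm0 (u : 'cV[R]_p) : nat := #|[set i : 'I_p | u i 0 != 0]|.

Definition norm1_on (J : {set 'I_p}) (u : 'cV[R]_p) : R := \sum_(i in J) `|u i 0|.

Definition psd (S : 'M[R]_p) : Prop :=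
  S^T = S /\ forall u : 'cV[R]_p, 0 <= dotv u (S *m u).

Definition specnorm (S : 'M[R]_p) : R :=
  sup [set norm2 (S *m u) | u in [set u : 'cV[R]_p | norm2 u <= 1]].

Definition re_const (S : 'M[R]_p) (s : nat) (c0 : R) : R :=
  inf [set dotv u (S *m u) / (norm2 u ^+ 2) | u in
        [set u : 'cV[R]_p | u != 0 /\ exists J : {set 'I_p},
           (#|J| <= s)%N /\ norm1_on (~: J) u <= c0 * norm1_on J u]].

Definition zn_obj (S : 'M[R]_p) (theta0 : 'cV[R]_p) (xi : R) (theta : 'cV[R]_p) : R :=
  2^-1 * dotv (theta - theta0) (S *m (theta - theta0)) + xi * norm1 theta.

End Defs.

From HB Require Import structures.
From mathcomp Require Import all_boot all_order all_algebra.
From mathcomp Require Import boolp classical_sets reals.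
From mathcomp.algebra_tactics Require Import ring lra.
Import Order.TTheory GRing.Theory Num.Theory.
Local Open Scope ring_scope.

(* Write u = thetaZN - theta0, g = Sigma u and Q = <u, Sigma u>.  Moving a
   nonzero coordinate of the minimizer towards 0 shows |g_i| >= xi on its
   support, so xi^2 ||thetaZN||_0 <= |g|^2 <= ||Sigma||_2 Q.  Comparing the
   objective at thetaZN and at theta0 puts u in the cone of the restricted
   eigenvalue condition on the support J of theta0 and gives
   Q <= 2 xi ||u_J||_1 <= 2 xi sqrt(s0) |u| <= 2 xi sqrt(s0 Q / kappa),
   i.e. kappa Q <= 4 xi^2 s0.  Combining both bounds,
   ||thetaZN||_0 <= 4 ||Sigma||_2 s0 / kappa. *)

Lemma ler_add_vanishing {R : realFieldType} (x y C : R) : 0 <= C ->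
  (forall s, 0 < s <= 1 -> x <= y + s * C) -> x <= y.
Proof.
move=> C0 H; apply/ler_addgt0Pr => e e0.
have eC : 0 < e + C by lra.
have s1 : e / (e + C) <= 1 by rewrite ler_pdivrMr // mul1r; lra.
have s0 : 0 < e / (e + C) by rewrite divr_gt0.
apply: le_trans (H (e / (e + C)) _) _; first by rewrite s0 s1.
rewrite lerD2l mulrAC ler_pdivrMr //; nra.
Qed.

Lemma quadratic_ge0_discr {R : realFieldType} (a b c : R) : 0 <= c ->
  (forall t, 0 <= a + 2 * t * b + t ^+ 2 * c) -> b ^+ 2 <= a * c.
Proof.
move=> c0 H; have a0 : 0 <= a by have := H 0; rewrite expr2; lra.
have [c0'|cn0] := eqVneq c 0.
  rewrite c0' mulr0; have [->|bn0] := eqVneq b 0; first by rewrite expr0n.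
  have := H (- (a + 1) / (2 * b)).
  have -> : 2 * (- (a + 1) / (2 * b)) * b = - (a + 1) by field.
  rewrite c0' mulr0; lra.
have cp : 0 < c by rewrite lt_def cn0.
have := H (- b / c).
have -> : a + 2 * (- b / c) * b + (- b / c) ^+ 2 * c = a - b ^+ 2 / c by field.
by rewrite subr_ge0 ler_pdivrMr // mulrC.
Qed.

Section InnerProduct.
Context {R : realType} {p : nat}.
Implicit Types (a b c u v : 'cV[R]_p) (S : 'M[R]_p).

Definition qform S u := dotv u (S *m u).

Lemma dotvC a b : dotv a b = dotv b a.
Proof. by apply: eq_bigr => i _; rewrite mulrC. Qed.

Lemma dotvDl a b c : dotv (a + b) c = dotv a c + dotv b c.
Proof. by rewrite /dotv -big_split; apply: eq_bigr => i _; rewrite !mxE mulrDl. Qed.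

Lemma dotvZl t a c : dotv (t *: a) c = t * dotv a c.
Proof. by rewrite /dotv mulr_sumr; apply: eq_bigr => i _; rewrite !mxE mulrA. Qed.

Lemma dotvDr a b c : dotv c (a + b) = dotv c a + dotv c b.
Proof. by rewrite !(dotvC c) dotvDl. Qed.

Lemma dotvZr t a c : dotv c (t *: a) = t * dotv c a.
Proof. by rewrite !(dotvC c) dotvZl. Qed.

Lemma dotv0r a : dotv a 0 = 0.
Proof. by rewrite /dotv big1 // => i _; rewrite mxE mulr0. Qed.

Lemma dotv_ge0 a : 0 <= dotv a a.
Proof. by apply: sumr_ge0 => i _; rewrite -expr2 sqr_ge0. Qed.

Lemma dotv_eq0 a : (dotv a a == 0) = (a == 0).
Proof.
apply/idP/eqP => [|->]; last by rewrite dotv0r.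
rewrite psumr_eq0 => [/allP a0|i _]; last by rewrite -expr2 sqr_ge0.
apply/matrixP => i j; rewrite (ord1 j) mxE.
by have := a0 i (mem_index_enum i); rewrite -expr2 sqrf_eq0 => /eqP.
Qed.

Lemma dotv_delta (i : 'I_p) v : dotv (delta_mx i 0) v = v i 0.
Proof.
rewrite /dotv (bigD1 i) //= big1 ?addr0; first by rewrite mxE !eqxx mul1r.
by move=> j ji; rewrite mxE (negbTE ji) mul0r.
Qed.

Lemma dotv_mulmx_sym S a b : S^T = S -> dotv a (S *m b) = dotv b (S *m a).
Proof.
move=> SS; rewrite /dotv.
under eq_bigr do rewrite mxE big_distrr.
rewrite exchange_big; apply: eq_bigr => j _; rewrite mxE big_distrr.
by apply: eq_bigr => i _ /=; rewrite -{2}SS mxE; ring.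
Qed.

Lemma qformDZ S a b t : S^T = S ->
  qform S (a + t *: b) = qform S a + 2 * t * dotv b (S *m a) + t ^+ 2 * qform S b.
Proof.
move=> SS; rewrite /qform mulmxDr -scalemxAr !(dotvDl, dotvDr, dotvZl, dotvZr).
by rewrite (dotv_mulmx_sym _ a b SS); ring.
Qed.

Lemma psd_cauchy_schwarz S a b : psd S ->
  dotv b (S *m a) ^+ 2 <= qform S a * qform S b.
Proof.
case=> SS S_ge0; apply: (quadratic_ge0_discr _ _ _ (S_ge0 b)) => t.
by rewrite -qformDZ //; apply: S_ge0.
Qed.

Lemma cauchy_schwarz a b : dotv a b ^+ 2 <= dotv a a * dotv b b.
Proof.
have psd1 : psd (1%:M : 'M[R]_p).
  by split=> [|u]; rewrite ?trmx1 // mul1mx dotv_ge0.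
by have := psd_cauchy_schwarz _ b a psd1; rewrite /qform !mul1mx mulrC.
Qed.

Lemma norm2_sqr a : norm2 a ^+ 2 = dotv a a.
Proof. by rewrite /norm2 sqr_sqrtr // dotv_ge0. Qed.

Lemma sqr_coord_le_dotv a i : a i 0 ^+ 2 <= dotv a a.
Proof.
rewrite /dotv (bigD1 i) //= -expr2 lerDl.
by apply: sumr_ge0 => j _; rewrite -expr2 sqr_ge0.
Qed.

Lemma norm1_on_sqr_le (J : {set 'I_p}) u :
  norm1_on J u ^+ 2 <= #|J|%:R * dotv u u.
Proof.
pose a : 'cV[R]_p := \col_i (i \in J)%:R.
pose b : 'cV[R]_p := \col_i ((i \in J)%:R * `|u i 0|).
have -> : norm1_on J u = dotv a b.
  rewrite /dotv /norm1_on big_mkcond /=; apply: eq_bigr => i _; rewrite !mxE.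
  by case: (i \in J); rewrite ?mul1r ?mul0r.
have -> : #|J|%:R = dotv a a :> R.
  rewrite /dotv -sumr_const big_mkcond /=; apply: eq_bigr => i _; rewrite !mxE.
  by case: (i \in J); rewrite ?mul1r ?mul0r.
have bu : dotv b b <= dotv u u.
  apply: ler_sum => i _; rewrite !mxE.
  case: (i \in J); rewrite ?mul1r ?mul0r ?mulr0 -?expr2 ?sqr_ge0 //.
  by rewrite real_normK ?num_real.
apply: le_trans (cauchy_schwarz a b) _.
by rewrite ler_wpM2l ?dotv_ge0.
Qed.

Lemma norm1_setC_split (J : {set 'I_p}) v :
  norm1 v = norm1_on J v + norm1_on (~: J) v.
Proof.
rewrite /norm1 /norm1_on (bigID (mem J)) /=; congr (_ + _).
by apply: eq_bigl => i; rewrite inE.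
Qed.

Lemma norm1DZ_delta v (i : 'I_p) t :
  norm1 (v + t *: delta_mx i 0) = norm1 v - `|v i 0| + `|v i 0 + t|.
Proof.
rewrite /norm1 (bigD1 i) //= [in RHS](bigD1 i) //= !mxE !eqxx mulr1.
rewrite (addrC `|v i 0|) addrK addrC; congr (_ + _).
by apply: eq_bigr => j ji; rewrite !mxE (negbTE ji) mulr0 addr0.
Qed.

End InnerProduct.

Section SpectralNorm.
Context {R : realType} {p : nat}.
Implicit Types (u v : 'cV[R]_p) (S : 'M[R]_p).

Lemma specnorm_ub S u : norm2 u <= 1 -> norm2 (S *m u) <= specnorm S.
Proof.
move=> u1; apply: ub_le_sup; last by exists u.
pose r i := \sum_j `|S i j|.
exists (Num.sqrt (\sum_i r i ^+ 2)) => _ [v /= v1 <-].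
rewrite /norm2 ler_wsqrtr // /dotv; apply: ler_sum => i _; rewrite -expr2.
have vj j : `|v j 0| <= 1.
  rewrite -(ler_pXn2r (n := 2)) ?nnegrE // expr1n real_normK ?num_real //.
  apply: le_trans (sqr_coord_le_dotv v j) _.
  by rewrite -norm2_sqr -(expr1n _ 2) ler_pXn2r ?nnegrE ?sqrtr_ge0.
have Svi : `|(S *m v) i 0| <= r i.
  rewrite mxE; apply: le_trans (ler_norm_sum _ _ _) _; apply: ler_sum => j _.
  by rewrite normrM ler_piMr.
by rewrite -real_normK ?num_real // ler_pXn2r ?nnegrE // (le_trans _ Svi).
Qed.

Lemma specnorm_ge0 S : 0 <= specnorm S.
Proof.
have n0 : norm2 (0 : 'cV[R]_p) = 0 by rewrite /norm2 dotv0r sqrtr0.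
by have := @specnorm_ub S 0; rewrite mulmx0 n0; apply; rewrite ler01.
Qed.

Lemma dotv_mulmx_le_specnorm S u :
  dotv (S *m u) (S *m u) <= specnorm S ^+ 2 * dotv u u.
Proof.
have [/eqP u0|uu0] := eqVneq (dotv u u) 0.
  by move: u0; rewrite dotv_eq0 => /eqP ->; rewrite mulmx0 dotv0r mulr0.
have uu : dotv u u = norm2 u ^+ 2 by rewrite norm2_sqr.
have r0 : 0 < norm2 u by rewrite sqrtr_gt0 lt_def uu0 dotv_ge0.
set r := norm2 u in uu r0 *.
have v1 : norm2 (r^-1 *: u) <= 1.
  rewrite /norm2 dotvZl dotvZr uu mulrA -expr2 -exprMn mulVf ?gt_eqF //.
  by rewrite expr1n sqrtr1.
have : norm2 (S *m (r^-1 *: u)) ^+ 2 <= specnorm S ^+ 2.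
  by rewrite ler_pXn2r ?nnegrE ?sqrtr_ge0 ?specnorm_ge0 ?specnorm_ub.
rewrite norm2_sqr -scalemxAr dotvZl dotvZr mulrA -expr2 uu.
by rewrite exprVn mulrC ler_pdivrMr ?exprn_gt0.
Qed.

Lemma qform_le_specnorm S u : qform S u <= specnorm S * dotv u u.
Proof.
set q := qform S u; set M := specnorm S * dotv u u.
have M0 : 0 <= M by rewrite mulr_ge0 ?specnorm_ge0 ?dotv_ge0.
have : q ^+ 2 <= M ^+ 2.
  apply: le_trans (cauchy_schwarz u (S *m u)) _.
  rewrite exprMn [dotv u u ^+ 2]expr2 mulrA [X in X <= _]mulrC ler_wpM2r ?dotv_ge0 //.
  exact: dotv_mulmx_le_specnorm.
by rewrite !expr2; nra.
Qed.

Lemma psd_dotv_mulmx_le S u : psd S ->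
  dotv (S *m u) (S *m u) <= specnorm S * qform S u.
Proof.
move=> Spsd; have [SS S_ge0] := Spsd; set g := S *m u.
have CS := psd_cauchy_schwarz _ g u Spsd.
rewrite -[dotv u _](dotv_mulmx_sym _ g u SS) in CS.
have Qg := qform_le_specnorm S g; have Qu := S_ge0 u.
have [G0|G_neq0] := eqVneq (dotv g g) 0; first by rewrite G0 mulr_ge0 ?specnorm_ge0.
have Gpos : 0 < dotv g g by rewrite lt_def G_neq0 dotv_ge0.
rewrite -(ler_pM2l Gpos) -expr2; apply: le_trans CS _.
by rewrite mulrA (mulrC (dotv g g)) ler_wpM2r.
Qed.

End SpectralNorm.

Lemma re_const_le {R : realType} {p : nat} (S : 'M[R]_p) (s : nat) (c0 : R)
    (J : {set 'I_p}) (u : 'cV[R]_p) :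
  psd S -> (#|J| <= s)%N -> norm1_on (~: J) u <= c0 * norm1_on J u ->
  re_const S s c0 * dotv u u <= qform S u.
Proof.
move=> [_ S_ge0] Js cone; have [->|u0] := eqVneq u 0.
  by rewrite dotv0r mulr0 /qform mulmx0 dotv0r.
have uu : 0 < dotv u u by rewrite lt_def dotv_eq0 u0 dotv_ge0.
rewrite -ler_pdivlMr // -norm2_sqr; apply: ge_inf.
  by exists 0 => _ [v _ <-]; rewrite divr_ge0 ?sqr_ge0.
by exists u => //; split=> //; exists J.
Qed.

Section ZeroNoiseLasso.
Context {R : realType} {p : nat}.
Implicit Types (u v z w : 'cV[R]_p) (S : 'M[R]_p).

Definition supp u : {set 'I_p} := [set i | u i 0 != 0].

(* [norm0] counts a classical set; this is the same count over a finset. *)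
Lemma card_supp u : #|supp u| = norm0 u.
Proof.
by apply: eq_card => i; rewrite !inE; apply/idP/idP; rewrite in_setE.
Qed.

Lemma norm0_le_dotv (xi : R) z u : 0 <= xi ->
  (forall i, z i 0 != 0 -> xi <= `|u i 0|) -> xi ^+ 2 * (norm0 z)%:R <= dotv u u.
Proof.
move=> xi0 H; rewrite -card_supp mulr_natr -sumr_const /dotv.
rewrite [X in _ <= X](bigID (mem (supp z))) /= -[X in X <= _]addr0.
rewrite lerD ?sumr_ge0 // => [|i _]; last by rewrite -expr2 sqr_ge0.
apply: ler_sum => i; rewrite inE => /H xi_le.
by rewrite -expr2 -[u i 0 ^+ 2]real_normK ?num_real // ler_pXn2r ?nnegrE.
Qed.

Lemma zn_obj_update S w (xi : R) z i t : S^T = S ->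
  zn_obj S w xi (z + t *: delta_mx i 0) = zn_obj S w xi z
    + t * (S *m (z - w)) i 0 + 2^-1 * (t ^+ 2 * qform S (delta_mx i 0))
    + xi * (`|z i 0 + t| - `|z i 0|).
Proof.
move=> SS; rewrite /zn_obj norm1DZ_delta.
have -> : z + t *: delta_mx i 0 - w = (z - w) + t *: delta_mx i 0 by rewrite addrAC.
rewrite -/(qform S (z - w + _)) qformDZ // dotv_delta -/(qform S (z - w)); by field.
Qed.

Context {S : 'M[R]_p} {w z : 'cV[R]_p} {xi : R}.
Hypotheses (Spsd : psd S) (xi_gt0 : 0 < xi)
  (z_min : forall theta, zn_obj S w xi z <= zn_obj S w xi theta).

Lemma zn_min_coord_grad i : z i 0 != 0 -> xi <= `|(S *m (z - w)) i 0|.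
Proof.
move=> zi0; set g := S *m (z - w); set a := `|z i 0|; set q := qform S (delta_mx i 0).
have a0 : 0 < a by rewrite normr_gt0.
have q0 : 0 <= q by exact: Spsd.2.
apply: (@ler_add_vanishing _ _ _ (a * q / 2)) => [|s /andP[s0 s1]].
  by rewrite divr_ge0 // mulr_ge0 // ltW.
have := z_min (z + (- (s * z i 0)) *: delta_mx i 0).
rewrite zn_obj_update ?Spsd.1 // -/g -/q.
have -> : `|z i 0 + - (s * z i 0)| - a = - (s * a).
  rewrite -{1}(mul1r (z i 0)) -mulrBl normrM ger0_norm ?subr_ge0 // -/a; ring.
have tg : - (s * z i 0) * g i 0 <= s * a * `|g i 0|.
  by rewrite (le_trans (ler_norm _)) // normrM normrN normrM (ger0_norm (ltW s0)).
rewrite sqrrN exprMn -[z i 0 ^+ 2]real_normK ?num_real // -/a => opt.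
rewrite -(ler_pM2l (mulr_gt0 s0 a0)); nra.
Qed.

Lemma zn_min_norm0_le :
  xi ^+ 2 * (norm0 z)%:R <= dotv (S *m (z - w)) (S *m (z - w)).
Proof. exact: norm0_le_dotv (ltW xi_gt0) zn_min_coord_grad. Qed.

Lemma zn_min_basic_ineq :
  2^-1 * qform S (z - w) + xi * norm1_on (~: supp w) (z - w)
    <= xi * norm1_on (supp w) (z - w).
Proof.
have := z_min w; rewrite /zn_obj subrr mulmx0 dotv0r mulr0 add0r -/(qform S _).
rewrite (norm1_setC_split (supp w) z) (norm1_setC_split (supp w) w).
have -> : norm1_on (~: supp w) w = 0.
  by apply: big1 => i; rewrite !inE negbK => /eqP ->; rewrite normr0.
have -> : norm1_on (~: supp w) z = norm1_on (~: supp w) (z - w).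
  by apply: eq_bigr => i; rewrite !inE negbK => /eqP wi; rewrite !mxE wi subr0.
have : norm1_on (supp w) w <= norm1_on (supp w) z + norm1_on (supp w) (z - w).
  rewrite -big_split; apply: ler_sum => i _; rewrite !mxE.
  by rewrite {1}[w i 0](_ : _ = z i 0 - (z i 0 - w i 0)) ?ler_normB //; ring.
move/(ler_wpM2l (ltW xi_gt0)); rewrite addr0 !mulrDr; lra.
Qed.

Lemma zn_min_cone :
  norm1_on (~: supp w) (z - w) <= 1 * norm1_on (supp w) (z - w).
Proof.
have Q0 : 0 <= 2^-1 * qform S (z - w) by rewrite mulr_ge0 ?invr_ge0 //; exact: Spsd.2.
have basic := zn_min_basic_ineq; rewrite mul1r -(ler_pM2l xi_gt0); lra.
Qed.

Lemma zn_min_qform_le :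
  re_const S (norm0 w) 1 * qform S (z - w) <= 4 * xi ^+ 2 * (norm0 w)%:R.
Proof.
set k := re_const _ _ _; set u := z - w; set Q := qform S u.
set A := norm1_on (supp w) u.
have Q0 : 0 <= Q by exact: Spsd.2.
have QA : Q <= 2 * xi * A.
  have := zn_min_basic_ineq; have : 0 <= norm1_on (~: supp w) u by exact: sumr_ge0.
  rewrite -/u -/Q -/A; have := ltW xi_gt0; nra.
have A2 : A ^+ 2 <= (norm0 w)%:R * dotv u u by rewrite -card_supp norm1_on_sqr_le.
have kU : k * dotv u u <= Q.
  by apply: re_const_le Spsd _ zn_min_cone; rewrite card_supp.
have X0 : 0 <= 4 * xi ^+ 2 := mulr_ge0 (ler0n R 4) (sqr_ge0 xi).
have RHS0 : 0 <= 4 * xi ^+ 2 * (norm0 w)%:R := mulr_ge0 X0 (ler0n R _).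
have [k_le0|k_gt0] := lerP k 0; first exact: le_trans (mulr_le0_ge0 k_le0 Q0) RHS0.
have [Q_eq0|Q_neq0] := eqVneq Q 0; first by rewrite Q_eq0 mulr0.
have Q_gt0 : 0 < Q by rewrite lt_def Q_neq0.
rewrite -(ler_pM2r Q_gt0).
have A0 : 0 <= A by exact: sumr_ge0.
have xi0 := ltW xi_gt0.
have QQ : Q * Q <= 4 * xi ^+ 2 * A ^+ 2 by rewrite !expr2; nra.
have := ler_wpM2l (ltW k_gt0) QQ.
have := ler_wpM2l (mulr_ge0 (ltW k_gt0) X0) A2.
have := ler_wpM2l (mulr_ge0 X0 (ler0n R (norm0 w))) kU.
lra.
Qed.

End ZeroNoiseLasso.

Theorem lemma2p1 (R : realType) (p : nat) (Sigma : 'M[R]_p)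
  (theta0 : 'cV[R]_p) (xi : R) (thetaZN : 'cV[R]_p) :
  psd Sigma ->
  0 < xi ->
  (forall theta : 'cV[R]_p,
      zn_obj Sigma theta0 xi thetaZN <= zn_obj Sigma theta0 xi theta) ->
  0 < re_const Sigma (norm0 theta0) 1 ->
  (norm0 thetaZN)%:R
    <= (1 + 4 * specnorm Sigma / re_const Sigma (norm0 theta0) 1)
       * (norm0 theta0)%:R.
Proof.
move=> Spsd xi_gt0 z_min k_gt0.
have NQ := le_trans (zn_min_norm0_le Spsd xi_gt0 z_min) (psd_dotv_mulmx_le _ _ Spsd).
have kQ := zn_min_qform_le Spsd xi_gt0 z_min.
move: NQ kQ (specnorm_ge0 Sigma); set k := re_const _ _ _; set L := specnorm _.
set Q := qform _ _; set N := (norm0 thetaZN)%:R; set s0 := (norm0 theta0)%:R.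
move=> NQ kQ L0; have xi2 : 0 < xi ^+ 2 by rewrite exprn_gt0.
have : xi ^+ 2 * (k * N) <= xi ^+ 2 * (4 * L * s0).
  have := ler_wpM2l (ltW k_gt0) NQ; have := ler_wpM2l L0 kQ; lra.
rewrite ler_pM2l // -ler_pdivlMl // => NL.
by rewrite mulrDl mul1r mulrAC -[N]add0r lerD // mulrC.
Qed.
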